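(* Let $n\ge 1$, $N=\{1,\dots,n\}$, $A=[0,1]$, and let $f$ be an OWA mechanism with weights $w_1,\dots,w_n\in[0,1]$, $\sum_j w_j=1$. Then $f$ satisfies proportional fairness (PF) if and only if $w_j=\frac1n$ for all $j\in\{1,\dots,n\}$.
   Context: A mechanism is a map $f:A^n\to A$ from profiles $x=(x_i)_{i\in N}$ of reported locations to a facility location. An OWA mechanism with weights $w_1,\dots,w_n$ returns $f(x)=\sum_{j=1}^n w_j x_{\pi(j)}$, where $\pi$ is a permutation of $N$ with $x_{\pi(1)}\le\dots\le x_{\pi(n)}$. The mechanism $f$ satisfies PF if for every profile $x\in A^n$, every coalition $S\subseteq N$ (nonempty) and every $i\in S$, $|x_i - f(x)| \le 1-\frac{|S|}{n} + r_S$, where $r_S=\max_{j\in S}x_j-\min_{j\in S}x_j$. *)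

From mathcomp Require Import all_boot all_order all_algebra.
From mathcomp Require Import reals.
Set Implicit Arguments. Unset Strict Implicit. Unset Printing Implicit Defensive.
Import Order.TTheory GRing.Theory Num.Theory.
Local Open Scope ring_scope.

(* Agents N = 'I_n, facility domain A = [0,1] within a real type R. *)

Definition sorted_profile (R : realType) (n : nat) (x : 'I_n -> R) : seq R :=
  sort <=%R [seq x i | i <- enum 'I_n].

(* OWA mechanism: f(x) = sum_j w_j x_{pi(j)} (index j is 0-based here). *)
Definition owa (R : realType) (n : nat) (w : 'I_n -> R) (x : 'I_n -> R) : R :=
  \sum_(j < n) w j * nth 0 (sorted_profile x) j.

Definition in01 (R : realType) (a : R) : bool := (0 <= a) && (a <= 1).

Definition range_S (R : realType) (n : nat) (S : {set 'I_n}) (x : 'I_n -> R) : R :=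
  \big[Num.max/0]_(j in S) x j - \big[Num.min/1]_(j in S) x j.

Definition PF (R : realType) (n : nat) (f : ('I_n -> R) -> R) : Prop :=
  forall x : 'I_n -> R, (forall i, in01 (x i)) ->
  forall S : {set 'I_n}, S != set0 ->
  forall i, i \in S ->
    `|x i - f x| <= 1 - (#|S|%:R / n%:R) + range_S S x.

(* Uniform weights make f the mean, and an agent i of a coalition S is within
   r_S of the |S| members of S and within 1 of everyone else, so that
   |x_i - f(x)| <= (|S| r_S + n - |S|) / n.  Conversely, for 0 < k < n let the
   first k agents report 0 and the others 1: f returns 1 - (w_1 + ... + w_k),
   and PF for the two constant coalitions forces w_1 + ... + w_k = k/n. *)

From mathcomp Require Import all_boot all_order all_algebra.
From mathcomp Require Import reals.
From mathcomp Require Import ring lra.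

Set Implicit Arguments.
Unset Strict Implicit.
Unset Printing Implicit Defensive.
Import Order.TTheory GRing.Theory Num.Theory.
Local Open Scope ring_scope.

Section OWA.

Variables (R : realType) (n : nat).
Implicit Types (w x : 'I_n -> R) (S : {set 'I_n}).

Lemma owa_nondecreasing w x :
  {homo x : i j / (i <= j)%N >-> i <= j} -> owa w x = \sum_j w j * x j.
Proof.
move=> x_homo; rewrite /owa /sorted_profile sorted_sort; last first.
- have enum_sorted : sorted (relpre val leq) (enum 'I_n).
    by rewrite -sorted_map val_enum_ord iota_sorted.
  by rewrite sorted_map; apply: sub_sorted enum_sorted.
- exact: le_trans.
apply: eq_bigr => j _.
by rewrite (nth_map j) ?size_enum_ord // nth_ord_enum.
Qed.

Lemma owa_cst w c x : (forall j, w j = c) -> owa w x = c * \sum_i x i.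
Proof.
move=> w_cst; rewrite /owa; under eq_bigr do rewrite w_cst.
rewrite -mulr_sumr /sorted_profile; congr (_ * _).
set s := sort _ _; have size_s : size s = n by rewrite size_sort size_map size_enum_ord.
rewrite -(big_mkord xpredT (nth 0 s)) -{1}size_s -(big_nth 0 xpredT id).
by rewrite (perm_big _ (permEl (perm_sort _ _))) big_map big_enum.
Qed.

Lemma owa_step w k :
  owa w (fun i => (k <= i)%:R) = \sum_(j < n | (k <= j)%N) w j.
Proof.
rewrite owa_nondecreasing => [|i j ij]; last first.
  by rewrite ler_nat; case: (leqP k i) => // /leq_trans/(_ ij) ->.
rewrite [RHS]big_mkcond; apply: eq_bigr => j _.
by case: leqP; rewrite ?mulr1 ?mulr0.
Qed.

Lemma range_S_ge_dist S x i j :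
  i \in S -> j \in S -> `|x i - x j| <= range_S S x.
Proof.
move=> iS jS; rewrite /range_S ler_norml lerNl opprB.
by apply/andP; split; apply: lerB; (apply: le_bigmax_cond || apply: bigmin_le_cond).
Qed.

(* [in01 v] is needed because the max and min in [range_S] start from 0 and 1. *)
Lemma range_S_cst S x v :
  S != set0 -> {in S, forall j, x j = v} -> in01 v -> range_S S x = 0.
Proof.
case/set0Pn=> i iS x_cst /andP[v_ge0 v_le1].
apply/eqP; rewrite eq_le; apply/andP; split; last first.
  by have := range_S_ge_dist x iS iS; rewrite subrr normr0.
rewrite subr_le0 (@le_trans _ _ v) //.
  by apply/bigmax_leP; split=> // j /x_cst ->.
by apply/bigmin_geP; split=> // j /x_cst ->.
Qed.

Lemma sum_dist_le S x i : (forall j, in01 (x j)) -> i \in S ->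
  \sum_j `|x i - x j| <= #|S|%:R * range_S S x + #|~: S|%:R.
Proof.
move=> x01 iS; rewrite (bigID (mem S)) /=; apply: lerD.
  rewrite mulr_natl -sumr_const; apply: ler_sum => j jS.
  exact: range_S_ge_dist.
rewrite -sumr_const; under [X in _ <= X]eq_bigl do rewrite in_setC.
apply: ler_sum => j _.
have /andP[? ?] := x01 i; have /andP[? ?] := x01 j.
by rewrite ler_norml; apply/andP; split; lra.
Qed.

Lemma owa_uniform_PF w : (forall j, w j = 1 / n%:R) -> PF (owa w).
Proof.
move=> w_unif x x01 S _ i iS.
have n_gt0 : 0 < n%:R :> R by rewrite ltr0n (leq_ltn_trans _ (ltn_ord i)).
rewrite (owa_cst x w_unif); set r := range_S S x.
have r_ge0 : 0 <= r by rewrite (le_trans _ (range_S_ge_dist x iS iS)).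
have card_S : #|S|%:R + #|~: S|%:R = n%:R :> R by rewrite -natrD cardsC card_ord.
have card_S_le : #|S|%:R * r <= n%:R * r.
  by rewrite ler_wpM2r // -card_S lerDl.
have mean_dev : x i - 1 / n%:R * \sum_j x j = 1 / n%:R * \sum_j (x i - x j).
  by rewrite sumrB sumr_const card_ord -mulr_natl; field; rewrite gt_eqF.
have inv_n_ge0 : 0 <= 1 / n%:R :> R by rewrite divr_ge0 // ltW.
rewrite mean_dev normrM ger0_norm //.
have sum_dev_le : `|\sum_j (x i - x j)| <= #|S|%:R * r + #|~: S|%:R.
  exact: le_trans (ler_norm_sum _ _ _) (sum_dist_le x01 iS).
apply: le_trans (ler_wpM2l inv_n_ge0 sum_dev_le) _.
rewrite -subr_ge0.
have -> : 1 - #|S|%:R / n%:R + r - 1 / n%:R * (#|S|%:R * r + #|~: S|%:R) =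
          (n%:R * r - #|S|%:R * r) / n%:R.
  by rewrite -card_S; field; rewrite card_S gt_eqF.
by rewrite divr_ge0 ?subr_ge0 // ltW.
Qed.

Lemma card_ord_lt k : (k <= n)%N -> #|[set i : 'I_n | (i < k)%N]| = k.
Proof.
move=> k_le_n; rewrite -sum1_card (eq_bigl (fun i : 'I_n => (i < k)%N)).
  by rewrite (big_ord_narrow k_le_n) sum1_card card_ord.
by move=> i; rewrite inE.
Qed.

Lemma prefix_sum_succ w (j : 'I_n) :
  \sum_(i < n | (i < j.+1)%N) w i = \sum_(i < n | (i < j)%N) w i + w j.
Proof.
rewrite (bigD1 j) //= addrC; congr (_ + _).
by apply: eq_bigl => i; rewrite ltnS andbC -ltn_neqAle.
Qed.

Lemma PF_cst_coalition (f : ('I_n -> R) -> R) x S i :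
  PF f -> (forall j, in01 (x j)) -> i \in S -> {in S, forall j, x j = x i} ->
  `|x i - f x| <= 1 - #|S|%:R / n%:R.
Proof.
move=> f_PF x01 iS x_cst; have S_neq0 : S != set0 by apply/set0Pn; exists i.
by have := f_PF x x01 S S_neq0 i iS; rewrite (range_S_cst S_neq0 x_cst) ?addr0.
Qed.

Lemma PF_owa_prefix_sum w k : PF (owa w) -> \sum_j w j = 1 -> (k <= n)%N ->
  \sum_(j < n | (j < k)%N) w j = k%:R / n%:R.
Proof.
move=> w_PF w_sum k_le_n; have [->|k_gt0] := posnP k.
  by rewrite mul0r big_pred0 // => j; rewrite ltn0.
move: k_le_n k_gt0; rewrite leq_eqVlt => /orP[/eqP-> n_gt0|k_lt_n k_gt0].
  rewrite divff ?pnatr_eq0 -?lt0n // -[RHS]w_sum.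
  by apply: eq_bigl => j; rewrite ltn_ord.
pose x (i : 'I_n) : R := (k <= i)%:R.
have x01 i : in01 (x i) by rewrite /in01 /x; case: leqP; rewrite ?lexx ?ler01.
have f_x : owa w x = 1 - \sum_(j < n | (j < k)%N) w j.
  rewrite owa_step -[1]w_sum [in RHS](bigID (fun j : 'I_n => (j < k)%N)) /=.
  rewrite addrC addrK.
  by apply: eq_bigl => j; rewrite -leqNgt.
pose S : {set 'I_n} := [set i : 'I_n | (i < k)%N].
have in_S i : (i \in S) = (i < k)%N by rewrite inE.
have card_S : #|S| = k := card_ord_lt (ltnW k_lt_n).
have x_S i : i \in S -> x i = 0 by rewrite in_S /x ltnNge => /negbTE->.
have x_notS i : i \in ~: S -> x i = 1 by rewrite in_setC in_S /x -leqNgt => ->.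
pose i0 := Ordinal (ltn_trans k_gt0 k_lt_n); pose i1 := Ordinal k_lt_n.
have i0S : i0 \in S by rewrite in_S.
have i1S : i1 \in ~: S by rewrite in_setC in_S ltnn.
have S_cst : {in S, forall j, x j = x i0} by move=> j jS; rewrite !x_S.
have notS_cst : {in ~: S, forall j, x j = x i1} by move=> j jS; rewrite !x_notS.
have card_notS : #|~: S| = (n - k)%N.
  by rewrite -card_S -[n in (n - _)%N]card_ord cardsCs setCK.
have := PF_cst_coalition w_PF x01 i0S S_cst.
have := PF_cst_coalition w_PF x01 i1S notS_cst.
rewrite card_S card_notS f_x (x_S _ i0S) (x_notS _ i1S).
rewrite (natrB _ (ltnW k_lt_n)) mulrBl divff; last first.
  by rewrite pnatr_eq0 -lt0n (ltn_trans k_gt0 k_lt_n).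
rewrite !ler_norml => /andP[_ P_le] /andP[P_ge _].
by apply/eqP; rewrite eq_le; apply/andP; split; lra.
Qed.

End OWA.

Theorem theorem4 (R : realType) (n : nat) (w : 'I_n -> R) :
  (1 <= n)%N ->
  (forall j, 0 <= w j <= 1) ->
  \sum_(j < n) w j = 1 ->
  (PF (owa w) <-> (forall j, w j = 1 / n%:R)).
Proof.
move=> _ _ w_sum; split=> [w_PF j|]; last exact: owa_uniform_PF.
have := PF_owa_prefix_sum w_PF w_sum (ltn_ord j).
rewrite prefix_sum_succ (PF_owa_prefix_sum w_PF w_sum (ltnW (ltn_ord j))).
by move=> w_j; apply: (addrI (j%:R / n%:R)); rewrite w_j -mulrDl natr1.
Qed.
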